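(* Fix a structure $\phi$ with nested prediction sets $C_{\phi,\lambda}(x)$ indexed by $\lambda\in\Lambda\subseteq\mathbb{R}$ (i.e. $\lambda_1\le\lambda_2$ implies $C_{\phi,\lambda_1}(x)\subseteq C_{\phi,\lambda_2}(x)$), and write $R(\lambda)=\mathbb{P}\{Y\notin C_{\phi,\lambda}(X)\}$. Let $\alpha\in(0,1)$ and $\lambda^\star=\inf\{\lambda:R(\lambda)\le\alpha\}$. Assume: (1) $R(\lambda)$ is continuous and strictly decreasing in a neighbourhood of $\lambda^\star$; (2) a sequence of random thresholds $\widehat{\lambda}_{\mathrm{DCO}}$ (indexed by sample size $m$) satisfies $\widehat{\lambda}_{\mathrm{DCO}}\xrightarrow{p}\lambda^\star$ as $m\to\infty$; (3) $\widehat{\lambda}_{\mathrm{CRC}}=\inf\{\lambda\in\Lambda:\widehat{R}_m(\lambda)+b_m(\lambda,\delta_m)\le\alpha\}$, where $\widehat{R}_m$ are random functions and $b_m(\lambda,\delta_m)\ge 0$ are random margins satisfying $\sup_{\lambda\in\Lambda}|\widehat{R}_m(\lambda)-R(\lambda)|\xrightarrow{p}0$ and $\sup_{\lambda\in\Lambda}b_m(\lambda,\delta_m)\xrightarrow{p}0$ as $m\to\infty$. Then $\widehat{\lambda}_{\mathrm{CRC}}-\widehat{\lambda}_{\mathrm{DCO}}\xrightarrow{p}0$.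
   Context: $(X,Y)$ is a random pair with values in $\mathcal{X}\times\mathcal{Y}$; $\delta_m\in(0,1)$ is a sequence of confidence parameters; $\xrightarrow{p}$ denotes convergence in probability as $m\to\infty$. *)

From HB Require Import structures.
From mathcomp Require Import all_boot all_order all_algebra.
From mathcomp Require Import all_classical all_reals all_analysis.
Set Implicit Arguments. Unset Strict Implicit. Unset Printing Implicit Defensive.
Import Order.TTheory GRing.Theory Num.Theory.
Import numFieldNormedType.Exports.
Local Open Scope classical_set_scope.
Local Open Scope ring_scope.

Definition outer_prob (d : measure_display) (T : measurableType d)
  (R : realType) (P : probability T R) (A : set T) : \bar R :=
  ereal_inf [set P B | B in [set B | measurable B /\ A `<=` B]].

Definition cvg_in_prob (d : measure_display) (T : measurableType d)
  (R : realType) (P : probability T R) (Z : nat -> T -> \bar R) (c : R) : Prop :=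
  forall eps : R, 0 < eps ->
    (fun m => outer_prob P [set w | (eps%:E < `|Z m w - c%:E|)%E])
      @ \oo --> 0%E.

Definition risk (d : measure_display) (T : measurableType d) (R : realType)
  (Q : probability T R) (X Y : Type) (XT : T -> X) (YT : T -> Y)
  (C : R -> X -> set Y) (l : R) : R :=
  fine (Q [set t | ~ C l (XT t) (YT t)]).

(* Strict decrease of the risk R at lambda* yields, for each e > 0, a margin
   t > 0 with R(lambda* + e) + t <= alpha < R(lambda* - e) - t.  Outside three
   events whose outer probabilities vanish, Rhat_m + b_m is uniformly t-close
   to R, which traps lambda_CRC in [lambda* - e, lambda* + e], and lambda_DCO
   lies in the same interval; hence |lambda_CRC - lambda_DCO| <= 2e. *)

From HB Require Import structures.
From mathcomp Require Import all_boot all_order all_algebra.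
From mathcomp Require Import all_classical all_reals all_analysis.
From mathcomp Require Import lra.
Set Implicit Arguments. Unset Strict Implicit. Unset Printing Implicit Defensive.
Import Order.TTheory GRing.Theory Num.Theory.
Import numFieldNormedType.Exports.
Local Open Scope classical_set_scope.
Local Open Scope ring_scope.

Section outer_prob.
Context (d : measure_display) (T : measurableType d) (R : realType)
  (P : probability T R).
Local Notation "P^*" := (outer_prob P).

Lemma outer_prob_ge0 A : (0 <= P^* A)%E.
Proof. by apply/ereal_infP => _ [B _ <-]; exact: measure_ge0. Qed.

Lemma outer_prob_le_measure A B :
  measurable B -> A `<=` B -> (P^* A <= P B)%E.
Proof. by move=> mB AB; apply: ge_ereal_inf; exists (P B) => //; exists B. Qed.

Lemma outer_prob_le A B : A `<=` B -> (P^* A <= P^* B)%E.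
Proof.
move=> AB; apply/ereal_infP => _ [E [mE BE] <-].
exact/outer_prob_le_measure/(subset_trans AB).
Qed.

Lemma outer_prob_fin_num A : P^* A \is a fin_num.
Proof.
rewrite ge0_fin_numE ?outer_prob_ge0 //.
apply: le_lt_trans (ltry 1); rewrite -(probability_setT P).
exact: outer_prob_le_measure.
Qed.

Lemma outer_prob_lt_cover A e : (P^* A < e)%E ->
  exists B, [/\ measurable B, A `<=` B & (P B < e)%E].
Proof. by move/ereal_inf_lt => [_ [B [mB AB] <-] lt]; exists B. Qed.

Lemma cvg_outer_prob0P (A : nat -> set T) :
  (fun m => P^* (A m)) @ \oo --> 0%E <->
  forall e : R, 0 < e -> \forall m \near \oo, (P^* (A m) < e%:E)%E.
Proof.
rewrite fine_cvgP; split.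
- move=> [_ /cvgrPdist_lt cvgA] e e0; apply: filterS (cvgA e e0) => m.
  rewrite sub0r normrN -(fineK (outer_prob_fin_num (A m))) lte_fin.
  exact: le_lt_trans (ler_norm _).
- move=> smallA; split; first by apply: nearW => m; exact: outer_prob_fin_num.
  apply/cvgrPdist_lt => e e0; apply: filterS (smallA e e0) => m.
  rewrite sub0r normrN ger0_norm ?fine_ge0 ?outer_prob_ge0 //.
  by rewrite -lte_fin fineK ?outer_prob_fin_num.
Qed.

Lemma cvg_outer_prob0_sub (A B : nat -> set T) :
  (forall m, A m `<=` B m) ->
  (fun m => P^* (B m)) @ \oo --> 0%E -> (fun m => P^* (A m)) @ \oo --> 0%E.
Proof.
move=> AB /cvg_outer_prob0P smallB; apply/cvg_outer_prob0P => e e0.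
by apply: filterS (smallB e e0) => m; exact/le_lt_trans/outer_prob_le.
Qed.

Lemma cvg_outer_prob0U (A B : nat -> set T) :
  (fun m => P^* (A m)) @ \oo --> 0%E -> (fun m => P^* (B m)) @ \oo --> 0%E ->
  (fun m => P^* (A m `|` B m)) @ \oo --> 0%E.
Proof.
move=> /cvg_outer_prob0P smallA /cvg_outer_prob0P smallB.
apply/cvg_outer_prob0P => e e0; have e20 : 0 < e / 2 by rewrite divr_gt0.
apply: filterS (filterI (smallA _ e20) (smallB _ e20)) => m [/outer_prob_lt_cover
  [A' [mA' AA' PA']] /outer_prob_lt_cover [B' [mB' BB' PB']]].
have mAB := measurableU _ _ mA' mB'.
apply: le_lt_trans (outer_prob_le_measure mAB (setUSS AA' BB')) _.
apply: le_lt_trans (measureU2 P mA' mB') _.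
by rewrite [e](Num.Theory.splitr e) EFinD lteD.
Qed.

End outer_prob.

(* Both lambda* (F = R) and lambda_CRC (F = Rhat_m + b_m) have this form. *)
Definition inf_sublevel (R : realType) (Lambda : set R) (F : R -> R) (alpha : R)
  : \bar R := ereal_inf [set l%:E | l in [set l | Lambda l /\ F l <= alpha]].

Section inf_sublevel.
Context (R : realType) (Lambda : set R) (alpha : R).

Lemma inf_sublevel_le (F : R -> R) l :
  Lambda l -> F l <= alpha -> (inf_sublevel Lambda F alpha <= l%:E)%E.
Proof. by move=> Ll Fl; apply: ge_ereal_inf; exists l%:E => //; exists l. Qed.

Lemma inf_sublevel_ge (F : R -> R) lo :
  (forall l, Lambda l -> F l <= alpha -> lo <= l) ->
  (lo%:E <= inf_sublevel Lambda F alpha)%E.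
Proof.
by move=> lo_le; apply/ereal_infP => _ [l [Ll Fl] <-]; rewrite lee_fin lo_le.
Qed.

Lemma lt_inf_sublevel (F : R -> R) l :
  Lambda l -> (l%:E < inf_sublevel Lambda F alpha)%E -> alpha < F l.
Proof.
by move=> Ll; apply: contraTT; rewrite -!leNgt; exact: inf_sublevel_le.
Qed.

Lemma gt_inf_sublevel (F : R -> R) lstar l :
  lstar%:E = inf_sublevel Lambda F alpha -> lstar < l ->
  (forall l', Lambda l' -> lstar <= l' < l -> F l < F l') -> F l < alpha.
Proof.
move=> lstarE lt_l F_dec.
have : (inf_sublevel Lambda F alpha < l%:E)%E by rewrite -lstarE lte_fin.
move=> /ereal_inf_lt [_ [l' [Ll' Fl'] <-]]; rewrite lte_fin => lt_l'.
have : (lstar%:E <= l'%:E)%E by rewrite lstarE inf_sublevel_le.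
by rewrite lee_fin => le_l'; apply: lt_le_trans Fl'; rewrite F_dec ?le_l'.
Qed.

Lemma inf_sublevel_bracket (Rk F : R -> R) t lo hi :
  (forall l1 l2, Lambda l1 -> Lambda l2 -> l1 <= l2 -> Rk l2 <= Rk l1) ->
  (forall l, Lambda l -> `|F l - Rk l| <= t) ->
  Lambda lo -> Lambda hi -> Rk hi + t <= alpha -> alpha + t < Rk lo ->
  (lo%:E <= inf_sublevel Lambda F alpha <= hi%:E)%E.
Proof.
move=> Rk_noninc F_near Llo Lhi hi_ok lo_bad; apply/andP; split.
- apply: inf_sublevel_ge => l Ll Fl; rewrite leNgt; apply/negP => lt_lo.
  have := Rk_noninc _ _ Ll Llo (ltW lt_lo); have := F_near _ Ll.
  rewrite ler_norml => /andP[? _]; lra.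
- apply: inf_sublevel_le => //; have := F_near _ Lhi.
  rewrite ler_norml => /andP[_ ?]; lra.
Qed.

Lemma inf_sublevel_margin (Rk : R -> R) lstar r e :
  lstar%:E = inf_sublevel Lambda Rk alpha ->
  `]lstar - r, lstar + r[ `<=` Lambda ->
  (forall l1 l2, l1 \in `]lstar - r, lstar + r[ ->
     l2 \in `]lstar - r, lstar + r[ -> l1 < l2 -> Rk l2 < Rk l1) ->
  0 < e < r ->
  exists2 t, 0 < t & Rk (lstar + e) + t <= alpha /\ alpha + t < Rk (lstar - e).
Proof.
move=> lstarE Lr Rk_dec /andP[e0 er].
have in_r l : lstar - r < l < lstar + r -> l \in `]lstar - r, lstar + r[.
  by rewrite in_itv.
have hi_lt : Rk (lstar + e) < alpha.
  apply: (gt_inf_sublevel lstarE); first lra.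
  by move=> l' _ /andP[? ?]; apply: Rk_dec; rewrite ?in_r //; lra.
have lo_gt : alpha < Rk (lstar - e).
  by apply: (lt_inf_sublevel (Lr _ (in_r _ _))); rewrite -?lstarE ?lte_fin; lra.
pose t := Num.min (alpha - Rk (lstar + e)) (Rk (lstar - e) - alpha).
have t0 : 0 < t by rewrite lt_min !subr_gt0 hi_lt lo_gt.
have [t_hi t_lo] : t <= alpha - Rk (lstar + e) /\ t <= Rk (lstar - e) - alpha.
  by rewrite !ge_min !lexx orbT.
by exists (t / 2); [rewrite divr_gt0 | split; lra].
Qed.

End inf_sublevel.


Lemma risk_nonincreasing (d : measure_display) (T : measurableType d)
  (R : realType) (Q : probability T R) (X Y : Type) (XT : T -> X) (YT : T -> Y)
  (Lambda : set R) (C : R -> X -> set Y) :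
  (forall l1 l2 x, Lambda l1 -> Lambda l2 -> l1 <= l2 -> C l1 x `<=` C l2 x) ->
  (forall l, Lambda l -> measurable [set t | ~ C l (XT t) (YT t)]) ->
  forall l1 l2, Lambda l1 -> Lambda l2 -> l1 <= l2 ->
    risk Q XT YT C l2 <= risk Q XT YT C l1.
Proof.
move=> C_nested C_meas l1 l2 L1 L2 le12.
apply: fine_le; [exact/fin_num_measure/C_meas.. |].
apply: le_measure; rewrite ?inE; [exact: C_meas.. | move=> t /= notC2].
by apply: contra_not notC2; apply: C_nested.
Qed.

Lemma ereal_sup_image_le (R : realType) (A : set R) (f : R -> R) s :
  (`|ereal_sup [set (f l)%:E | l in A]| <= s%:E)%E -> forall l, A l -> f l <= s.
Proof.
move=> sup_le l Al; rewrite -lee_fin; apply: le_trans sup_le.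
by apply: le_trans (lee_abs _); apply: ereal_sup_ubound; exists l.
Qed.

Lemma abs_sube_bracket (R : realType) (x : \bar R) (y a e : R) :
  ((a - e)%:E <= x <= (a + e)%:E)%E -> `|y - a| <= e ->
  (`|x - y%:E| <= (e *+ 2)%:E)%E.
Proof.
case/andP; case: x => [x | |] // ; rewrite !lee_fin => ? ?.
rewrite !ler_norml => /andP[? ?]; apply/andP; split; lra.
Qed.

Theorem proposition3p3
  (R : realType)
  (* the random pair (X,Y) with values in 𝒳 × 𝒴 *)
  (dT : measure_display) (T : measurableType dT) (Q : probability T R)
  (X Y : Type) (XT : T -> X) (YT : T -> Y)
  (* nested prediction sets C_{phi,lambda}, lambda in Lambda *)
  (Lambda : set R) (C : R -> X -> set Y)
  (C_nested : forall l1 l2 x, Lambda l1 -> Lambda l2 -> l1 <= l2 ->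
       C l1 x `<=` C l2 x)
  (C_meas : forall l, Lambda l -> measurable [set t | ~ C l (XT t) (YT t)])
  (alpha : R) (alpha01 : 0 < alpha < 1)
  (lstar : R)
  (lstar_def : lstar%:E = ereal_inf
       [set l%:E | l in [set l | Lambda l /\ risk Q XT YT C l <= alpha]])
  (* (1) continuity and strict decrease of R near lambda* *)
  (H1 : exists2 r : R, 0 < r &
       [/\ `]lstar - r, lstar + r[ `<=` Lambda,
           {within `]lstar - r, lstar + r[, continuous (risk Q XT YT C)} &
           forall l1 l2, l1 \in `]lstar - r, lstar + r[ ->
             l2 \in `]lstar - r, lstar + r[ -> l1 < l2 ->
             risk Q XT YT C l2 < risk Q XT YT C l1])
  (* the calibration-data probability space *)
  (dO : measure_display) (Omega : measurableType dO) (P : probability Omega R)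
  (* (2) DCO thresholds *)
  (lamDCO : nat -> Omega -> R)
  (H2 : cvg_in_prob P (fun m w => (lamDCO m w)%:E) lstar)
  (* (3) CRC ingredients *)
  (delta : nat -> R) (delta01 : forall m, 0 < delta m < 1)
  (Rhat : nat -> Omega -> R -> R) (b : nat -> Omega -> R -> R -> R)
  (b_ge0 : forall m w l, Lambda l -> 0 <= b m w l (delta m))
  (H3R : cvg_in_prob P (fun m w =>
       ereal_sup [set (`|Rhat m w l - risk Q XT YT C l|)%:E | l in Lambda]) 0)
  (H3b : cvg_in_prob P (fun m w =>
       ereal_sup [set (b m w l (delta m))%:E | l in Lambda]) 0)
  (lamCRC : nat -> Omega -> \bar R)
  (lamCRC_def : forall m w, lamCRC m w = ereal_inf
       [set l%:E | l in [set l | Lambda l /\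
                                  Rhat m w l + b m w l (delta m) <= alpha]]) :
  cvg_in_prob P (fun m w => (lamCRC m w - (lamDCO m w)%:E)%E) 0.
Proof.
have [r r0 [Lr _ Rk_dec]] := H1.
move=> eps eps0.
pose e := Num.min (eps / 2) (r / 2).
have e0 : 0 < e by rewrite lt_min !divr_gt0.
have [e_eps e_r] : e <= eps / 2 /\ e <= r / 2 by rewrite !ge_min !lexx orbT.
have e_in : 0 < e < r by apply/andP; split; lra.
have [t t0 [hi_ok lo_bad]] := inf_sublevel_margin lstar_def Lr Rk_dec e_in.
have Lhi : Lambda (lstar + e).
  by apply: Lr; rewrite /= in_itv /=; apply/andP; split; lra.
have Llo : Lambda (lstar - e).
  by apply: Lr; rewrite /= in_itv /=; apply/andP; split; lra.
have t20 : 0 < t / 2 by rewrite divr_gt0.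
apply: cvg_outer_prob0_sub
  (cvg_outer_prob0U (cvg_outer_prob0U (H3R _ t20) (H3b _ t20)) (H2 _ e0)).
move=> m w /= far; apply: contrapT => /not_orP[/not_orP[]].
move=> /negP; rewrite -leNgt sube0 => /ereal_sup_image_le Rhat_near.
move=> /negP; rewrite -leNgt sube0 => /ereal_sup_image_le b_small.
move=> /negP; rewrite -leNgt lee_fin => DCO_near.
have CRC_near : ((lstar - e)%:E <= lamCRC m w <= (lstar + e)%:E)%E.
  rewrite lamCRC_def.
  apply: (inf_sublevel_bracket (F := fun l => Rhat m w l + b m w l (delta m))
            (risk_nonincreasing Q C_nested C_meas) _ Llo Lhi hi_ok lo_bad).
  move=> l Ll; have := Rhat_near l Ll; have := b_small l Ll.
  have := b_ge0 m w l Ll.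
  by rewrite !ler_norml => ? ? /andP[? ?]; apply/andP; split; lra.
move: far; rewrite sube0 ltNge => /negP; apply.
by apply: le_trans (abs_sube_bracket CRC_near DCO_near) _; rewrite lee_fin; lra.
Qed.
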